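(* As Laurent series in $z$, $$\sum_{n\ge0}\binom{2n+2}{n}z^n=\frac{13}{z^2}+3\left(-\frac{z+1}{z^2}+3\frac{1-z-z^2}{z^2(1-z)}\right)\Psi(-z)+\left(4+\frac6z-\frac4{z^2}\right)\Psi^3(-z)+3\left(4z+2-\frac1z-\frac5{z^2}\right)\Psi^5(-z)\quad\text{modulo }27.$$
   Context: $\Psi(z)=\prod_{j\ge0}(1+z^{3^j})$, so $\Psi(-z)=\prod_{j\ge0}(1-z^{3^j})$. Rational functions are expanded as Laurent series in $z$; ''modulo $27$'' means all coefficients of the difference are divisible by $27$. *)

From mathcomp Require Import all_boot all_order all_algebra.
Set Implicit Arguments. Unset Strict Implicit. Unset Printing Implicit Defensive.
Import GRing.Theory Num.Theory.
Local Open Scope ring_scope.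

Definition fps := nat -> int.

Definition fadd (f g : fps) : fps := fun n => f n + g n.
Definition fmul (f g : fps) : fps := fun n => \sum_(i < n.+1) f i * g (n - i)%N.
Definition fone : fps := fun n => (n == 0%N)%:R.
Definition fpow (f : fps) (k : nat) : fps := iter k (fmul f) fone.
Definition fpoly (p : {poly int}) : fps := fun n => p`_n.
Definition geom : fps := fun _ => 1.

(* Psi(-z) = prod_{j>=0} (1 - z^(3^j)): the coefficient of z^n is that of the
   finite product over j <= n (factors with j > n only affect degrees > n). *)
Definition PsiNeg : fps :=
  fun n => (\prod_(j < n.+1) (1 - 'X^(3 ^ j)) : {poly int})`_n.

(* Laurent series with a pole of order at most 2 at z = 0 are represented as
   z^(-2) * F with F a power series; lcoef F k is the coefficient of z^k. *)
Definition lcoef (F : fps) (k : int) : int :=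
  match (k + 2)%R with Posz m => F m | Negz _ => 0 end.

(* LHS: sum_{n>=0} binom(2n+2,n) z^n, written as z^(-2) * (z^2 * LHS) *)
Definition lhs_num : fps :=
  fun m => if (2 <= m)%N then ('C(2 * (m - 2) + 2, m - 2))%:R else 0.

(* RHS multiplied by z^2 (so RHS = z^(-2) * rhs_num):
   13 + 3(-(z+1) + 3(1-z-z^2)/(1-z)) Psi(-z) + (4z^2+6z-4) Psi^3(-z)
      + 3(4z^3+2z^2-z-5) Psi^5(-z) *)
Definition rhs_num : fps :=
  fadd (fpoly 13%:P)
  (fadd (fmul (fadd (fpoly (- 3 *: ('X + 1)))
                    (fmul (fpoly (9 *: (1 - 'X - 'X^2))) geom)) PsiNeg)
  (fadd (fmul (fpoly (4 *: 'X^2 + 6 *: 'X - 4%:P)) (fpow PsiNeg 3))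
        (fmul (fpoly (3 *: (4 *: 'X^3 + 2 *: 'X^2 - 'X - 5%:P))) (fpow PsiNeg 5)))).

From mathcomp Require Import all_boot all_order all_algebra.
From mathcomp Require Import ring zify.
Set Implicit Arguments. Unset Strict Implicit. Unset Printing Implicit Defensive.
Import GRing.Theory Num.Theory.
Local Open Scope ring_scope.

(* Both sides are compared coefficientwise up to an
   arbitrary degree N, i.e. as polynomials modulo the ideal (27, X^(N+1)).

   Let P be Psi(-z), B = sum_n C(2n, n) z^n = 1/sqrt(1 - 4z) and let S be
   z^2 times the right-hand side.  The argument runs as follows.
   - Frobenius modulo 3 gives P^3 = P(-z^3) = P/(1 - z), so e := (1 - z) P^2 - 1
     vanishes modulo 3 and e^3 vanishes modulo 27.
   - An explicit polynomial identity ([cube_identity]) then shows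
     (1 - 4z) (2 S + 1)^2 = (1 - 2z)^2 modulo 27.
   - Since (1 - 4z) B^2 = 1, the element 2 S + 1 - (1 - 2z) B is annihilated by
     (2 S + 1 + (1 - 2z) B), a unit modulo 27; hence 2 S + 1 = (1 - 2z) B.
   - Finally (1 - 2z) B = 1 + 2 z^2 sum_n C(2n+2, n) z^n, and 2 is invertible
     modulo 27.
   The file first develops congruences and units modulo (m, X^N) over any
   commutative ring, then the truncated series, and concludes. *)

Section IdealModX.
Variable R : comNzRingType.
Implicit Types (m p q a b c : {poly R}) (N : nat).

Definition in_mX N m p : Prop := exists g k, p = m * g + 'X^N * k.

Definition eqmX N m p q : Prop := in_mX N m (p - q).

Section Closure.
Variables (N : nat) (m : {poly R}).

Lemma in_mX_eq p q : p = q -> in_mX N m p -> in_mX N m q.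
Proof. by move=> ->. Qed.

Lemma in_mXD p q : in_mX N m p -> in_mX N m q -> in_mX N m (p + q).
Proof. by move=> [g [k ->]] [g' [k' ->]]; exists (g + g'), (k + k'); ring. Qed.

Lemma in_mXN p : in_mX N m p -> in_mX N m (- p).
Proof. by move=> [g [k ->]]; exists (- g), (- k); ring. Qed.

Lemma in_mXB p q : in_mX N m p -> in_mX N m q -> in_mX N m (p - q).
Proof. by move=> Hp Hq; apply: in_mXD => //; apply: in_mXN. Qed.

Lemma in_mXMl p q : in_mX N m p -> in_mX N m (q * p).
Proof. by move=> [g [k ->]]; exists (q * g), (q * k); ring. Qed.

Lemma in_mX_gen q : in_mX N m (m * q).
Proof. by exists q, 0; ring. Qed.

Lemma in_mX_Xn k q : (N <= k)%N -> in_mX N m ('X^k * q).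
Proof.
by move=> le; exists 0, ('X^(k - N) * q); rewrite mulrA -exprD subnKC //; ring.
Qed.

Lemma in_mX_of0 p : in_mX N 0 p -> in_mX N m p.
Proof. by move=> [g [k ->]]; exists 0, k; ring. Qed.

Lemma eqmX_refl p : eqmX N m p p.
Proof. by exists 0, 0; rewrite subrr; ring. Qed.

Lemma eqmX_trans p q r : eqmX N m p q -> eqmX N m q r -> eqmX N m p r.
Proof. by rewrite /eqmX => Hpq Hqr; apply: (in_mX_eq _ (in_mXD Hpq Hqr)); ring. Qed.

Lemma eqmXM p q p' q' : eqmX N m p q -> eqmX N m p' q' -> eqmX N m (p * p') (q * q').
Proof.
rewrite /eqmX => H H'; apply: (in_mX_eq _ (in_mXD (in_mXMl p' H) (in_mXMl q H'))); ring.
Qed.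

Lemma eqmX_prod (I : Type) (r : seq I) (F G : I -> {poly R}) :
  (forall i, eqmX N m (F i) (G i)) ->
  eqmX N m (\prod_(i <- r) F i) (\prod_(i <- r) G i).
Proof.
by move=> FG; apply: big_ind2 => [|p q p' q'|i _]; [apply: eqmX_refl | apply: eqmXM |].
Qed.

End Closure.

Lemma in_mX_powX k m a b : in_mX k m ((m * a + 'X * b) ^+ k).
Proof.
elim: k => [|k [g [h e]]]; first by exists 0, 1; ring.
exists (g * (m * a + 'X * b) + 'X^k * h * a), (h * b).
by rewrite exprS e exprS; ring.
Qed.

Lemma in_mX_cube N m p : in_mX N m p -> in_mX N (m ^+ 3) (p ^+ 3).
Proof.
move=> [g [k ->]]; exists (g ^+ 3).
by exists (k * (3 * (m * g) ^+ 2 + 3 * (m * g) * ('X^N * k) + ('X^N * k) ^+ 2)); ring.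
Qed.

Definition unit_mod N m a : Prop := exists b, in_mX N m (a * b - 1).

Lemma unit_mod_cancel N m a c : unit_mod N m a -> in_mX N m (a * c) -> in_mX N m c.
Proof.
move=> [b Hab] Hac; apply: (in_mX_eq _ (in_mXB (in_mXMl b Hac) (in_mXMl c Hab))); ring.
Qed.

(* Every element congruent to 1 modulo (m, X) is a unit modulo (m, X^N):
   its inverse is a truncated geometric series. *)
Lemma unit_mod_1X N m a b : unit_mod N m (1 - (m * a + 'X * b)).
Proof.
set y := m * a + 'X * b; exists (\sum_(i < N) y ^+ i).
apply: (in_mX_eq _ (in_mXN (in_mX_powX N m a b))); rewrite -/y.
by rewrite -[1 - y]opprB mulNr -subrX1; ring.
Qed.

Lemma horner0_split p : exists q, p = p.[0]%:P + 'X * q.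
Proof.
have /factor_theorem [q eq] : root (p - p.[0]%:P) 0 by rewrite /root !hornerE subrr.
by exists q; move: eq; rewrite polyC0 subr0 mulrC => <-; ring.
Qed.

Lemma unit_mod_const1 N m p : p.[0] = 1 -> unit_mod N m p.
Proof.
move=> p01; have [q ->] := horner0_split p; rewrite p01.
by have := unit_mod_1X N m 0 (- q); rewrite mulr0 add0r mulrN opprK addrC.
Qed.

End IdealModX.

Lemma in_mX0_coefs (R : comNzRingType) N (p : {poly R}) :
  (forall n, (n < N)%N -> p`_n = 0) -> in_mX N 0 p.
Proof.
move=> low; exists 0, (drop_poly N p).
have take0 : take_poly N p = 0.
  by apply/polyP => i; rewrite coef_take_poly coef0; case: ifP => // /low.
by rewrite -{1}(poly_take_drop N p) take0 add0r mul0r add0r mulrC.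
Qed.

Lemma in_mX0_deriv (R : numDomainType) N (p : {poly R}) :
  p`_0 = 0 -> in_mX N 0 p^`() -> in_mX N.+1 0 p.
Proof.
move=> p0 [g [k dp]]; apply: in_mX0_coefs => -[//|n] ltnN.
have := congr1 (fun q : {poly R} => q`_n) dp.
rewrite coef_deriv mul0r add0r coefXnM (ltnN : (n < N)%N) => /eqP.
by rewrite mulrn_eq0 => /orP [//|/eqP].
Qed.

Lemma in_mX_coef N (c : nat) (p : {poly int}) :
  in_mX N.+1 c%:R p -> (c%:Z %| p`_N)%Z.
Proof.
move=> [g [k ->]]; rewrite coefD coefXnM ltnSn addr0 mulr_natl coefMn.
by apply/dvdzP; exists g`_N; rewrite -mulr_natr natz.
Qed.

Lemma frobenius3 (R : comNzRingType) N (a : {poly R}) :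
  eqmX N 3 ((1 - a) ^+ 3) (1 - a ^+ 3).
Proof. by exists (a ^+ 2 - a), 0; ring. Qed.

Definition agree N (f : fps) (p : {poly int}) := forall n, (n <= N)%N -> f n = p`_n.

Section Agree.
Variable N : nat.

Lemma agree_add f g p q : agree N f p -> agree N g q -> agree N (fadd f g) (p + q).
Proof. by move=> Hf Hg n le; rewrite /fadd coefD Hf // Hg. Qed.

Lemma agree_mul f g p q : agree N f p -> agree N g q -> agree N (fmul f g) (p * q).
Proof.
move=> Hf Hg n le; rewrite /fmul coefM; apply: eq_bigr => i _.
have le_iN : (i <= N)%N by apply: leq_trans le; rewrite -ltnS.
by rewrite Hf // Hg // (leq_trans (leq_subr _ _) le).
Qed.

Lemma agree_poly p : agree N (fpoly p) p.
Proof. by []. Qed.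

Lemma agree_pow f p k : agree N f p -> agree N (fpow f k) (p ^+ k).
Proof.
move=> Hf; elim: k => [|k IH]; last by rewrite exprS; apply: agree_mul.
by move=> n _; rewrite expr0 coef1.
Qed.

End Agree.

Definition psi_trunc N : {poly int} := \prod_(j < N.+1) (1 - 'X^(3 ^ j)).
Definition geom_trunc N : {poly int} := \sum_(i < N.+1) 'X^i.
Definition cbin_trunc N : {poly int} := \poly_(i < N.+1) ('C(i.*2, i))%:R.
Definition lhs_trunc N : {poly int} := \poly_(i < N.+1) lhs_num i.

Lemma agree_geom N : agree N geom (geom_trunc N).
Proof.
move=> n le; rewrite /geom_trunc coef_sum (bigD1 (Ordinal (le : (n < N.+1)%N))) //=.
rewrite coefXn eqxx big1 ?addr0 // => i /eqP ne.
by rewrite coefXn; case: eqP => // eq_in; case: ne; apply: val_inj.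
Qed.

(* Factors 1 - X^(3^j) with j > n do not affect the coefficient of X^n. *)
Lemma psi_trunc_coef n d : (psi_trunc (n + d))`_n = (psi_trunc n)`_n.
Proof.
elim: d => [|d IH]; first by rewrite addn0.
rewrite addnS /psi_trunc big_ord_recr /= mulrBr mulr1 coefB coefMXn -IH.
have -> : (n < 3 ^ (n + d).+1)%N.
  have lt3n : (n < 3 ^ n)%N by exact: ltn_expl.
  by apply: leq_trans lt3n _; rewrite leq_exp2l //; lia.
by rewrite subr0.
Qed.

Lemma agree_psi N : agree N PsiNeg (psi_trunc N).
Proof. by move=> n le; rewrite /PsiNeg -(subnKC le) psi_trunc_coef. Qed.

Lemma psi_trunc0 N : (psi_trunc N).[0] = 1.
Proof.
rewrite horner_prod big1 // => i _.
by rewrite !hornerE expr0n expn_eq0 /= subr0.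
Qed.

(* The key 3-adic property of Psi: (1 - z) Psi(-z)^2 = 1 modulo 3.
   Indeed Psi(-z)^3 = Psi(-z^3) = Psi(-z) / (1 - z) modulo 3. *)
Lemma psi_sq N : in_mX N.+1 3 ((1 - 'X) * psi_trunc N ^+ 2 - 1).
Proof.
set P := psi_trunc N; set P3 := \prod_(j < N.+1) (1 - 'X^(3 ^ j.+1)) : {poly int}.
have cube : eqmX N.+1 3 (P ^+ 3) P3.
  rewrite /P /psi_trunc -prodrXl; apply: eqmX_prod => j.
  by rewrite expnSr exprM; apply: frobenius3.
have shift : (1 - 'X) * P3 = P * (1 - 'X^(3 ^ N.+1)).
  rewrite /P /psi_trunc /P3 [in RHS]big_ord_recl [in LHS]big_ord_recr /= expn0 expr1.
  by under [in RHS]eq_bigr => i _ do rewrite /bump /= add1n; ring.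
have tail : in_mX N.+1 3 ('X^(3 ^ N.+1) * P).
  by apply: in_mX_Xn; apply: ltnW; apply: ltn_expl.
apply: (unit_mod_cancel (unit_mod_const1 _ _ (psi_trunc0 N))).
apply: (in_mX_eq _ (in_mXB (in_mXMl (1 - 'X) cube) tail)).
by rewrite mulrBr shift -/P; ring.
Qed.

Lemma bin_center_rec m :
  ('C((m.+1).*2, m.+1) * m.+1 = 'C(m.*2, m) * (m.*2.+1).*2)%N.
Proof.
have h1 := mul_bin_diag (m.*2.+2) m.
have h2 := mul_bin_diag (m.*2.+1) m.
have sym : 'C(m.*2.+1, m) = 'C(m.*2.+1, m.+1).
  by rewrite -bin_sub -addnn; [congr 'C(_, _); lia | lia].
rewrite doubleS; rewrite /= sym in h1.
move: h1 h2; rewrite -!muln2 /=.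
by move: ('C(_, m.+1)) ('C(_, m.+1)) ('C(_, m)) => a b c; nia.
Qed.

(* The truncated series B of central binomial coefficients satisfies the
   differential equation (1 - 4z) B' = 2 B of 1/sqrt(1 - 4z). *)
Lemma cbin_ode N :
  in_mX N 0 ((1 - 4 * 'X) * (cbin_trunc N)^`() - 2 * cbin_trunc N).
Proof.
apply: in_mX0_coefs => n lt.
rewrite mulrBl mul1r -mulrA !coefB !mulr_natl !coefMn coefXM !coef_deriv.
rewrite /cbin_trunc; case: n lt => [|k] lt /=.
  by rewrite !coef_poly ltnS lt /= bin1.
rewrite !coef_poly ltnS lt ltnW //.
move/(congr1 (fun x => x%:R : int)): (bin_center_rec k.+1); rewrite !natrM.
set x := ('C(_, k.+2))%:R; set y := ('C(_, k.+1))%:R => e.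
rewrite -[x *+ _]mulr_natr -[y *+ _ *+ _]mulrnA -[y *+ (_ * _)]mulr_natr.
by rewrite -[y *+ 2]mulr_natr e -!muln2 !natrM; ring.
Qed.

Lemma cbin_sq N : in_mX N.+1 0 ((1 - 4 * 'X) * cbin_trunc N ^+ 2 - 1).
Proof.
apply: in_mX0_deriv.
  by rewrite coefB coef1 -horner_coef0 !hornerE horner_coef0 coef_poly bin0 subrr.
have -> : ((1 - 4 * 'X) * cbin_trunc N ^+ 2 - 1)^`() =
    2 * cbin_trunc N * ((1 - 4 * 'X) * (cbin_trunc N)^`() - 2 * cbin_trunc N).
  by rewrite !derivE; ring.
by apply: in_mXMl; apply: cbin_ode.
Qed.

Lemma bin_center_split k :
  ('C(k.+2.*2, k.+2) = 2 * 'C(k.+1.*2, k.+1) + 2 * 'C(k.+1.*2, k))%N.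
Proof.
rewrite !doubleS.
have e1 := binS (k.*2.+3) k.+1.
have e2 := binS (k.*2.+2) k.+1.
have e3 := binS (k.*2.+2) k.
have e4 : 'C(k.*2.+2, k.+2) = 'C(k.*2.+2, k).
  by rewrite -bin_sub -addnn; [congr 'C(_, _); lia | lia].
lia.
Qed.

Lemma cbin_lhs N :
  eqmX N.+1 0 ((1 - 2 * 'X) * cbin_trunc N) (2 * lhs_trunc N + 1).
Proof.
apply: in_mX0_coefs => n lt.
rewrite mulrBl mul1r -mulrA !coefB coefD coef1 !mulr_natl !coefMn coefXM.
rewrite /cbin_trunc /lhs_trunc !coef_poly lt.
case: n lt => [|[|k]] lt /=; rewrite /lhs_num /=; first by rewrite subrr.
  by rewrite bin1 subrr.
rewrite ltnW //.
have -> : (2 * (k.+2 - 2) + 2 = k.+1.*2)%N by rewrite -addnn; lia.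
have -> : (k.+2 - 2 = k)%N by lia.
by rewrite bin_center_split natrD !natrM; ring.
Qed.

(* The polynomial s(x, q) such that (1 - x) (2 S + 1) = 27 (1 - x) + 2 q s(x, q)
   for x = z and q = Psi(-z), where S is z^2 times the right-hand side. *)
Definition rhs_core (R : comNzRingType) (x q : R) : R :=
  - 3 * (x + 1) * (1 - x) + 9 * (1 - x - x ^+ 2)
  + (4 * x ^+ 2 + 6 * x - 4) * (1 - x) * q ^+ 2
  + 3 * (4 * x ^+ 3 + 2 * x ^+ 2 - x - 5) * (1 - x) * q ^+ 4.

(* The algebraic heart of the theorem: writing e = (1 - x) q^2 - 1,
   (1 - x) (1 - 4x) (2 q s)^2 - (1 - x)^3 (1 - 2x)^2 lies in the ideal (27, e^3).
   Since e = 0 modulo 3 for q = Psi(-z), this gives the square of the identity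
   modulo 27. *)
Lemma cube_identity (R : comNzRingType) (x q : R) :
  let e := (1 - x) * q ^+ 2 - 1 in
  (1 - x) * (1 - 4 * x) * (2 * q * rhs_core x q) ^+ 2
    - (1 - x) ^+ 3 * (1 - 2 * x) ^+ 2
  = 27 * ((25 - 19 * x - 205 * x ^+ 2 - 389 * x ^+ 3 - 320 * x ^+ 4 - 116 * x ^+ 5)
     + (156 - 216 * x - 1108 * x ^+ 2 - 1760 * x ^+ 3 - 1232 * x ^+ 4 - 448 * x ^+ 5) * e
     + (360 - 648 * x - 2208 * x ^+ 2 - 3264 * x ^+ 3 - 2112 * x ^+ 4 - 768 * x ^+ 5) * e ^+ 2
     + (380 - 741 * x - 2193 * x ^+ 2 - 3160 * x ^+ 3 - 1982 * x ^+ 4 - 721 * x ^+ 5) * e ^+ 3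
     + (184 - 343 * x - 1108 * x ^+ 2 - 1607 * x ^+ 3 - 1017 * x ^+ 4 - 370 * x ^+ 5) * e ^+ 4
     + (33 - 53 * x - 219 * x ^+ 2 - 341 * x ^+ 3 - 235 * x ^+ 4 - 85 * x ^+ 5) * e ^+ 5)
    + e ^+ 3 * ((4 - x - 5 * x ^+ 2 + 8 * x ^+ 3 + 10 * x ^+ 4 + 11 * x ^+ 5)
     + (12 - 3 * x + 12 * x ^+ 2 - 3 * x ^+ 3 + 3 * x ^+ 4 + 6 * x ^+ 5) * e
     + (9 - 9 * x + 9 * x ^+ 2 - 9 * x ^+ 3 + 9 * x ^+ 4 - 9 * x ^+ 5) * e ^+ 2).
Proof. by move=> e; rewrite /e /rhs_core; ring. Qed.

(* S = z^2 times the right-hand side, truncated at degree N; it mirrors the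
   shape of [rhs_num] so that agreement is checked structurally. *)
Definition rhs_trunc N : {poly int} :=
  13%:P + (((- 3 *: ('X + 1)) + (9 *: (1 - 'X - 'X^2)) * geom_trunc N) * psi_trunc N
  + ((4 *: 'X^2 + 6 *: 'X - 4%:P) * psi_trunc N ^+ 3
     + (3 *: (4 *: 'X^3 + 2 *: 'X^2 - 'X - 5%:P)) * psi_trunc N ^+ 5)).

Lemma agree_rhs N : agree N rhs_num (rhs_trunc N).
Proof.
have agreeP := @agree_psi N.
apply: agree_add; first exact: agree_poly.
apply: agree_add.
  apply: agree_mul => //; apply: agree_add; first exact: agree_poly.
  by apply: agree_mul; [exact: agree_poly | exact: agree_geom].
by apply: agree_add; apply: agree_mul; try exact: agree_poly; apply: agree_pow.
Qed.

Section Truncation.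
Variable N : nat.
Local Notation P := (psi_trunc N).
Local Notation Rhs := (rhs_trunc N).
Local Notation W := ((1 - 2 * 'X) * cbin_trunc N).

Lemma rhs_truncE : Rhs = 13 + ((- 3 * ('X + 1) + 9 * (1 - 'X - 'X^2) * geom_trunc N) * P
  + ((4 * 'X^2 + 6 * 'X - 4) * P ^+ 3 + (3 * (4 * 'X^3 + 2 * 'X^2 - 'X - 5)) * P ^+ 5)).
Proof. by rewrite /rhs_trunc -!mul_polyC !polyCN !polyC_natr. Qed.

(* The terms of S of degree 0 cancel: 13 + 6 - 4 - 15 = 0. *)
Lemma rhs_trunc0 : Rhs.[0] = 0.
Proof.
rewrite rhs_truncE !hornerE psi_trunc0 /geom_trunc horner_sum big_ord_recl /=.
by rewrite big1 => [|i _]; rewrite ?hornerXn ?expr0n //= addr0 expr0 hornerE.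
Qed.

Lemma rhs_times_1X :
  eqmX N.+1 0 ((1 - 'X) * (2 * Rhs + 1)) (27 * (1 - 'X) + 2 * P * rhs_core 'X P).
Proof.
have geomE : (1 - 'X) * geom_trunc N = 1 - 'X^(N.+1).
  by rewrite /geom_trunc -[1 - 'X]opprB mulNr -subrX1 opprB.
rewrite /eqmX rhs_truncE /rhs_core.
rewrite (_ : _ - _ = 18 * (1 - 'X - 'X^2) * P * ((1 - 'X) * geom_trunc N - 1)); last by ring.
by apply: in_mXMl; rewrite geomE; exists 0, (- 1); ring.
Qed.

(* The square of the theorem: (1 - 4z) (2 S + 1)^2 = (1 - 2z)^2 modulo 27.
   Multiplied by (1 - z)^3, this is [cube_identity] at q = Psi(-z), where
   e^3 vanishes modulo 27 by [psi_sq]. *)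
Lemma rhs_sq :
  eqmX N.+1 27 ((1 - 4 * 'X) * (2 * Rhs + 1) ^+ 2) ((1 - 2 * 'X) ^+ 2).
Proof.
set T := (1 - 'X) * (2 * Rhs + 1).
have T_core : eqmX N.+1 27 T (2 * P * rhs_core 'X P).
  apply: eqmX_trans (in_mX_of0 27 rhs_times_1X) _.
  by exists (1 - 'X), 0; ring.
have e3 : in_mX N.+1 27 (((1 - 'X) * P ^+ 2 - 1) ^+ 3).
  by have := in_mX_cube (@psi_sq N); rewrite -natrX; apply.
have identity : in_mX N.+1 27 ((1 - 'X) * (1 - 4 * 'X) * (2 * P * rhs_core 'X P) ^+ 2
                                 - (1 - 'X) ^+ 3 * (1 - 2 * 'X) ^+ 2).
  have /= -> := cube_identity 'X P.
  by apply: in_mXD; [exact: in_mX_gen | rewrite mulrC; apply: in_mXMl].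
have core : in_mX N.+1 27
    ((1 - 'X) * (1 - 4 * 'X) * T ^+ 2 - (1 - 'X) ^+ 3 * (1 - 2 * 'X) ^+ 2).
  have T_sq := in_mXMl ((1 - 'X) * (1 - 4 * 'X)) (eqmXM T_core T_core).
  by apply: (in_mX_eq _ (in_mXD T_sq identity)); ring.
have cube0 : ((1 - 'X) ^+ 3).[0] = 1 :> int by rewrite !hornerE.
apply: (unit_mod_cancel (unit_mod_const1 N.+1 27 cube0)).
by apply: (in_mX_eq _ core); rewrite /T; ring.
Qed.

(* Taking square roots: 2 S + 1 = (1 - 2z)/sqrt(1 - 4z) modulo 27.  The other
   factor 2 S + 1 + W has constant term 2 and is therefore a unit. *)
Lemma rhs_root : eqmX N.+1 27 (2 * Rhs + 1) W.
Proof.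
have lin0 : (1 - 4 * 'X : {poly int}).[0] = 1 by rewrite !hornerE.
have prod : in_mX N.+1 27 ((2 * Rhs + 1 - W) * (2 * Rhs + 1 + W)).
  apply: (unit_mod_cancel (unit_mod_const1 N.+1 27 lin0)).
  have W_sq := in_mX_of0 27 (in_mXMl ((1 - 2 * 'X) ^+ 2) (@cbin_sq N)).
  by apply: (in_mX_eq _ (in_mXB rhs_sq W_sq)); ring.
have sum0 : (2 * Rhs + 1 + W).[0] = 2.
  by rewrite !hornerD hornerM rhs_trunc0 !hornerE horner_coef0 coef_poly bin0.
have [q split] := horner0_split (2 * Rhs + 1 + W).
have unit_sum : unit_mod N.+1 27 (14 * (2 * Rhs + 1 + W)).
  rewrite split sum0 polyC_natr (_ : 14 * _ = 1 - (27 * -1 + 'X * (- 14 * q))).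
    exact: unit_mod_1X.
  by ring.
apply: (unit_mod_cancel unit_sum); apply: (in_mX_eq _ (in_mXMl 14 prod)); ring.
Qed.

Lemma lhs_rhs_mod27 : in_mX N.+1 27 (lhs_trunc N - Rhs).
Proof.
have unit2 : unit_mod N.+1 27 (2 : {poly int}) by exists 14; exists 1, 0; ring.
apply: (unit_mod_cancel unit2).
apply: (in_mX_eq _ (in_mXN (in_mXD (in_mX_of0 27 (@cbin_lhs N)) rhs_root))); ring.
Qed.

End Truncation.

(* The coefficient of z^k is that of z^(k+2) in the numerators, read off at
   truncation degree k + 2. *)
Theorem theorem5p1 :
  forall k : int, (27 %| lcoef lhs_num k - lcoef rhs_num k)%Z.
Proof.
move=> k; rewrite /lcoef; case: (k + 2) => [m|_]; last by rewrite subrr dvdz0.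
have -> : lhs_num m = (lhs_trunc m)`_m by rewrite coef_poly ltnSn.
rewrite (agree_rhs (leqnn m)) -coefB.
exact: (in_mX_coef (lhs_rhs_mod27 m)).
Qed.
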